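(* Let $m\ge2$, $\alpha,\beta\in\mathbb C$, and let $A_{\alpha,\beta}$ be the $m\times m$ tridiagonal matrix with ones on the sub- and superdiagonal, $(1,1)$ entry $\alpha$, $(m,m)$ entry $\beta$, and zeros elsewhere. For $1\le i\le m-1$ let $$P_i^{(\alpha,\beta)}=T_m(z^i+z^{-i})+H_i^{(\alpha)}+J_mH_i^{(\beta)}J_m,$$ and $P_0^{(\alpha,\beta)}=I_m$. Then for every $n=1,\ldots,m-1$, $$A_{\alpha,\beta}^n=\sum_{i=0}^{\lfloor (n-1)/2\rfloor}\binom{n}{i}P_{n-2i}^{(\alpha,\beta)}+\varphi_nI_m,$$ where $\varphi_n=0$ if $n$ is odd and $\varphi_n=\binom{n}{n/2}$ if $n$ is even.
   Context: $I_m$ is the $m\times m$ identity and $J_m$ the $m\times m$ permutation matrix with ones on the anti-diagonal. $T_m(z^i+z^{-i})$ is the $m\times m$ symmetric Toeplitz matrix with ones on the $i$-th super- and subdiagonal and zeros elsewhere. For $\gamma\in\mathbb C$, let $\theta_\gamma=\gamma^2-1$, $h_1^{\gamma}(z)=\gamma z$ and $h_n^{\gamma}(z)=\theta_\gamma\sum_{j=1}^{n-1}\gamma^{n-j-1}z^j+\gamma z^n$ for $n\ge2$; $H_i^{(\gamma)}$ is the $m\times m$ Hankel matrix whose $(k,l)$ entry is the coefficient of $z^{k+l-1}$ in $h_i^{\gamma}(z)$ (i.e. the leading $m\times m$ principal submatrix of the semi-infinite Hankel matrix with first column the coefficient vector of $h_i^\gamma$). *)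

From HB Require Import structures.
From mathcomp Require Import all_boot all_order all_algebra.
From mathcomp Require Export complex.
Set Implicit Arguments. Unset Strict Implicit. Unset Printing Implicit Defensive.
Import Order.TTheory GRing.Theory Num.Theory.
Local Open Scope ring_scope.

Section Defs.
Variable (C : comNzRingType).

(* A_{alpha,beta}: tridiagonal, (1,1) = alpha, (m,m) = beta (0-indexed: (0,0), (m-1,m-1)). *)
Definition Aab (m : nat) (a b : C) : 'M[C]_m :=
  \matrix_(k < m, l < m)
    if k == l :> nat then
      (if k == 0%N :> nat then a else if k == m.-1 :> nat then b else 0)
    else (((k.+1 == l :> nat) || (l.+1 == k :> nat))%:R : C).

(* T_m(z^i + z^-i) *)
Definition Tsym (m i : nat) : 'M[C]_m :=
  \matrix_(k < m, l < m) (((k + i == l)%N || (l + i == k)%N)%:R : C).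

Definition Jm (m : nat) : 'M[C]_m :=
  \matrix_(k < m, l < m) ((k + l == m.-1)%N%:R : C).

Definition theta (g : C) : C := g ^+ 2 - 1.

Definition hpoly (g : C) (n : nat) : {poly C} :=
  if n == 1%N then g *: 'X
  else theta g *: (\sum_(1 <= j < n) (g ^+ (n - j - 1)) *: 'X^j) + g *: 'X^n.

(* H_i^{(gamma)}: (k,l) entry (1-indexed) = coef of z^{k+l-1}; 0-indexed: z^{k+l+1} *)
Definition Hank (m : nat) (g : C) (i : nat) : 'M[C]_m :=
  \matrix_(k < m, l < m) (hpoly g i)`_(k + l + 1).

Definition Pab (m : nat) (a b : C) (i : nat) : 'M[C]_m :=
  if i == 0%N then 1%:M
  else Tsym m i + Hank m a i + Jm m *m Hank m b i *m Jm m.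

Definition phin (n : nat) : C := if odd n then 0 else ('C(n, n./2))%:R.
End Defs.

From mathcomp Require Import all_boot all_order all_algebra.
From mathcomp Require Import ring zify.
Import GRing.Theory.
Set Implicit Arguments. Unset Strict Implicit.
Local Open Scope ring_scope.

(* The matrices P_k satisfy P_k A = P_(k+1) + P_(k-1), and P_1 A = P_2 + 2 P_0,
   as long as k + 2 <= m: this is how z^k + z^-k behaves under multiplication
   by z + z^-1.  Hence A^n is read off (z + z^-1)^n = sum_k C(n, (n-k)/2) z^k by
   replacing z^k + z^-k with P_k.  The recurrence is checked entrywise: in an
   inner column, multiplying by A shifts the Hankel coefficients,
   (h_(k+1))_(t+1) = (h_k)_t; in the first and last columns, the corner entry
   gamma of A is absorbed by h_(k+1) = gamma h_k + gamma z^(k+1) - z^k. *)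

Section HpolyCoef.
Variables (C : comNzRingType) (g : C).

Lemma hpoly_coef k t : (hpoly g k)`_t =
  if (0 < t < k)%N then theta g * g ^+ (k - t - 1) else if t == k then g else 0.
Proof.
rewrite /hpoly; case: eqP => [->|_].
  by rewrite coefZ coefX; case: t => [|[|t]]; rewrite ?mulr0 ?mulr1.
rewrite coefD !coefZ coefXn coef_sum.
under eq_bigr => j _ do rewrite coefZ coefXn mulr_natr mulrb eq_sym.
rewrite -big_mkcond big_nat1_eq /=.
case: ifP => [/andP[t_gt0 t_lt]|_]; first by rewrite (ltn_eqF t_lt) mulr0 addr0.
by rewrite mulr0 add0r; case: eqP; rewrite ?mulr1 ?mulr0.
Qed.

Lemma hpoly_coef_gt k t : (k < t)%N -> (hpoly g k)`_t = 0.
Proof. by move=> lt_kt; rewrite hpoly_coef gtn_eqF // ifF //; lia. Qed.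

Lemma hpoly_coefSS k t : (0 < t)%N -> (hpoly g k.+1)`_t.+1 = (hpoly g k)`_t.
Proof. by move=> t_gt0; rewrite !hpoly_coef /= ltnS t_gt0 eqSS subSS. Qed.

Lemma hpoly_coefS k t : (0 < t)%N ->
  (hpoly g k.+1)`_t = g * (hpoly g k)`_t + g * (t == k.+1)%:R - (t == k)%:R.
Proof.
move=> t_gt0; rewrite !hpoly_coef t_gt0 /=.
case: (ltngtP t k) => [lt_tk|lt_kt|->].
- have lt_tk1 : (t < k.+1)%N by lia.
  rewrite lt_tk1 (ltn_eqF lt_tk1).
  have -> : (k.+1 - t - 1 = (k - t - 1).+1)%N by lia.
  by rewrite exprS subr0 mulr0 addr0 mulrCA.
- rewrite ltnNge lt_kt /= mulr0 subr0 add0r.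
  by case: eqP; rewrite ?mulr1 ?mulr0.
- rewrite ltnSn (ltn_eqF (ltnSn k)) subSnn subnn /theta /=; ring.
Qed.

End HpolyCoef.

Ltac case_nat_tests :=
  repeat match goal with
  | |- context [?x == ?y] => case: (eqVneq x y) => ?; try (exfalso; lia)
  | |- context [(?x < ?y)%N] => case: (ltnP x y) => ?; try (exfalso; lia)
  end.

Section Entries.
Variables (C : comNzRingType) (m : nat).

Lemma Jm_rowsub : Jm C m = rowsub (@rev_ord m) 1%:M.
Proof.
apply/matrixP => i j; rewrite !mxE; congr (_%:R).
by rewrite -val_eqE /=; have := ltn_ord i; lia.
Qed.

Lemma Jm_conjE (M : 'M[C]_m) i j : (Jm C m *m M *m Jm C m) i j = M (rev_ord i) (rev_ord j).
Proof.
have Jm_colsub : Jm C m = colsub (@rev_ord m) 1%:M.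
  apply/matrixP => k l; rewrite Jm_rowsub !mxE; congr (_%:R).
  by rewrite -!val_eqE /=; have := ltn_ord k; have := ltn_ord l; lia.
rewrite {1}Jm_rowsub -rowsubE Jm_colsub mulmx_colsub mulmx1.
by rewrite !mxE.
Qed.

Variables (a b : C).

Definition pab_coef (k r l : nat) : C :=
  ((r + k == l) || (l + k == r))%:R + (hpoly a k)`_(r + l + 1)
  + (hpoly b k)`_(m.-1 - r + (m.-1 - l) + 1).

Lemma Pab_coefE k i j : Pab m a b k i j = pab_coef k i j.
Proof.
rewrite /Pab /pab_coef; case: eqP => [->|_].
  rewrite !hpoly_coef_gt ?addn1 // !mxE !addr0 -val_eqE /=.
  by congr (_%:R); lia.
rewrite 2!mxE Jm_conjE !mxE /=.
by congr (_ + _); congr (_`_ _); have := ltn_ord i; have := ltn_ord j; lia.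
Qed.

Hypothesis m_ge2 : (2 <= m)%N.

Definition mulA_coef (f : nat -> nat -> C) (r l : nat) : C :=
  (0 < l)%:R * f r l.-1 + (l.+1 < m)%:R * f r l.+1
  + ((l == 0)%:R * a + (l == m.-1)%:R * b) * f r l.

Lemma mulmx_Aab (f : nat -> nat -> C) :
  (\matrix_(i < m, j < m) f i j) *m Aab m a b = \matrix_(i, j) mulA_coef f i j.
Proof.
apply/matrixP => i j; rewrite !mxE /mulA_coef.
under eq_bigr => s _ do rewrite !mxE.
rewrite -(big_mkord xpredT (fun s => f i s * (if s == j then
  (if s == 0 then a else if s == m.-1 then b else 0) else ((s.+1 == j) || (j.+1 == s))%:R))).
move: (nat_of_ord j) (ltn_ord j) (nat_of_ord i) => {}j lt_jm {}i.
rewrite (eq_big_nat _ _ (F2 := fun s => (if s == j.-1 then (0 < j)%:R * f i s else 0)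
  + (if s == j.+1 then f i s else 0)
  + (if s == j then ((j == 0)%:R * a + (j == m.-1)%:R * b) * f i s else 0))); last first.
  move=> s _; case_nat_tests; rewrite /=; ring.
by rewrite !big_split /= -!big_mkcond !big_nat1_eq; case_nat_tests; rewrite /=; ring.
Qed.

Lemma pab_coef_mulA k r l : (k.+3 <= m)%N -> (r < m)%N -> (l < m)%N ->
  mulA_coef (pab_coef k.+1) r l
  = pab_coef k.+2 r l + pab_coef k r l + ((k == 0) && (r == l))%:R.
Proof.
move=> k_lt r_lt l_lt; rewrite /mulA_coef /pab_coef.
have [l0|l_gt0] := posnP l.
  subst l; rewrite m_ge2 (ltn_eqF (_ : 0 < m.-1)%N); last lia.
  rewrite !addn1 !addn0 subn0 (hpoly_coefSS a k (t := r.+1)) //.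
  rewrite (hpoly_coefS a k.+1 (t := r.+1)) // !(hpoly_coef_gt b); try lia.
  by case_nat_tests; rewrite /=; ring.
have [l_int|l_last] := ltnP l.+1 m; last first.
  have {l_last} -> : l = m.-1 by lia.
  rewrite eqxx.
  have -> : (m.-1 - r + (m.-1 - m.-2) + 1 = (m.-1 - r).+2)%N by lia.
  rewrite subnn addn0 !addn1 (hpoly_coefSS b k (t := (m.-1 - r).+1)) //.
  rewrite (hpoly_coefS b k.+1 (t := (m.-1 - r).+1)) // !(hpoly_coef_gt a); try lia.
  by case_nat_tests; rewrite /=; ring.
rewrite (ltn_eqF (_ : l < m.-1)%N); last lia.
have -> : (r + l.-1 + 1 = (r + l.-1).+1)%N by lia.
have -> : (r + l + 1 = (r + l.-1).+2)%N by lia.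
have -> : (r + l.+1 + 1 = (r + l.-1).+3)%N by lia.
have -> : (m.-1 - r + (m.-1 - l.-1) + 1 = (m.-1 - r + (m.-1 - l.+1)).+3)%N by lia.
have -> : (m.-1 - r + (m.-1 - l) + 1 = (m.-1 - r + (m.-1 - l.+1)).+2)%N by lia.
set s := (r + l.-1)%N; set u := (m.-1 - r + (m.-1 - l.+1))%N; rewrite [(u + 1)%N]addn1.
rewrite (hpoly_coefSS a k.+1 (t := s.+1)) // (hpoly_coefSS a k (t := s.+2)) //.
rewrite (hpoly_coefSS b k.+1 (t := u.+1)) // (hpoly_coefSS b k (t := u.+2)) //.
by case_nat_tests; rewrite /=; ring.
Qed.

Lemma Aab_Pab1 : Aab m a b = Pab m a b 1.
Proof.
apply/matrixP => i j; rewrite Pab_coefE /pab_coef !hpoly_coef !mxE.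
move: (ltn_ord i) (ltn_ord j) => ? ?.
by case_nat_tests; rewrite /=; ring.
Qed.

Lemma Pab_mulA k : (k.+2 <= m)%N ->
  Pab m a b k *m Aab m a b
  = Pab m a b k.+1 + Pab m a b k.-1 *+ (0 < k)%N + Pab m a b 0 *+ (k == 1).
Proof.
case: k => [_|k k_lt]; first by rewrite mul1mx Aab_Pab1 !mulr0n !addr0.
have -> : Pab m a b k.+1 = \matrix_(i, j) pab_coef k.+1 i j.
  by apply/matrixP => i j; rewrite mxE Pab_coefE.
rewrite /= mulr1n -[Pab m a b 0]/1%:M; apply/matrixP => i j.
rewrite mulmx_Aab [LHS]mxE pab_coef_mulA // [RHS]mxE [X in _ = X + _]mxE !Pab_coefE mulmxnE !mxE.
by rewrite eqSS; case: (k == 0); rewrite /= ?mulr0n ?mulr1n.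
Qed.

End Entries.

(* The coefficient of z^k in (z + z^-1)^n. *)
Definition zbinom (n k : nat) : nat :=
  if ((k <= n) && ~~ odd (n + k))%N then 'C(n, (n - k)./2) else 0.

Lemma zbinom_gt n k : (n < k)%N -> zbinom n k = 0%N.
Proof. by move=> lt_nk; rewrite /zbinom ifF //; lia. Qed.

Lemma zbinomS0 n : zbinom n.+1 0 = (zbinom n 1).*2.
Proof.
rewrite /zbinom addn0 addn1 subn0 subn1 /= negbK.
case: (boolP (odd n)) => [n_odd|]; rewrite ?andbF //.
have [j ->] : exists j, n = j.*2.+1 by exists n./2; lia.
rewrite -[uphalf _]/(j.+1.*2./2) half_double /= half_double.
rewrite binS -['C(_, _).*2]addnn; congr (_ + _).
by rewrite -bin_sub; [congr 'C(_, _)|]; lia.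
Qed.

Lemma zbinomSS n k : zbinom n.+1 k.+1 = (zbinom n k + zbinom n k.+2)%N.
Proof.
rewrite /zbinom !addnS addSn /= negbK.
case: (boolP (odd (n + k))) => [|even_nk]; first by rewrite !andbF.
rewrite !andbT ltnS; case: (ltngtP k n) => [lt_kn|lt_nk|<-].
- have [j def_j] : exists j, (n - k)./2 = j.+1 by exists (n - k)./2.-1; lia.
  rewrite subSS def_j ifT; last by lia.
  by rewrite (_ : (n - k.+2)./2 = j) ?binS //; lia.
- by rewrite ifF //; lia.
- by rewrite !subnn !bin0 ltnNge leqnSn.
Qed.

Lemma sum_zbinomS (V : nmodType) (P : nat -> V) N n : (n.+2 <= N)%N ->
  \sum_(0 <= k < N) P k *+ zbinom n.+1 k
  = \sum_(0 <= k < N) (P k.+1 + P k.-1 *+ (0 < k)%N + P 0 *+ (k == 1)) *+ zbinom n k.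
Proof.
case: N => [|[|N]] // le_nN.
rewrite big_nat_recl // zbinomS0.
under eq_bigr => k _ do rewrite zbinomSS mulrnDr.
under [RHS]eq_bigr => k _ do rewrite !mulrnDl.
rewrite !big_split /=.
rewrite [X in _ = _ + _ + X]big_nat_recl // [X in _ = _ + _ + (_ + X)]big_nat_recl //.
rewrite [X in _ = _ + _ + (_ + (_ + X))]big1 => [|k _]; last by rewrite mul0rn.
rewrite [X in _ = _ + X + _]big_nat_recl //= [X in _ = _ + (_ + X) + _]big_nat_recl //=.
rewrite [X in _ = X + _ + _]big_nat_recr //= [X in _ + (_ + X) = _]big_nat_recr //=.
rewrite (zbinom_gt (k := N.+1)) ?(zbinom_gt (k := N.+2)); try lia.
rewrite !mulr0n !mul0rn !addr0 !add0r -addnn mulrnDr.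
under [X in _ = _ + (_ + X) + _]eq_bigr => i _ do rewrite mulr1n.
by rewrite !mulr1n [RHS]addrC [X in _ = _ + X]addrCA !addrA.
Qed.

Lemma zbinomE n k :
  zbinom n k = (\sum_(0 <= j < n./2.+1) (k == n - 2 * j) * 'C(n, j))%N.
Proof.
under eq_big_nat => j /andP[_ j_le].
  have -> : ((k == n - 2 * j) * 'C(n, j)
      = if j == (n - k)./2 then ((k <= n) && ~~ odd (n + k)) * 'C(n, j) else 0)%N.
    case: (eqVneq j (n - k)./2) => [->|ne]; case: (eqVneq k (n - 2 * _)%N) => ?;
      case: (boolP ((k <= n) && ~~ odd (n + k))%N) => ?; rewrite ?mul0n ?mul1n //; lia.
  over.
rewrite -big_mkcond big_nat1_eq /zbinom [RHS]ifT; last lia.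
by case: (_ && _); rewrite ?mul0n ?mul1n.
Qed.

Lemma sum_zbinom (V : nmodType) (P : nat -> V) N n : (n < N)%N ->
  \sum_(0 <= k < N) P k *+ zbinom n k
  = \sum_(0 <= j < n./2.+1) P (n - 2 * j)%N *+ 'C(n, j).
Proof.
move=> lt_nN; under eq_bigr => k _ do rewrite zbinomE -sumrMnr.
rewrite exchange_big_nat /=; apply: eq_bigr => j _.
under eq_bigr => k _ do rewrite mulnC mulrnA mulrb.
by rewrite -big_mkcond big_nat1_eq ifT //; lia.
Qed.

Lemma sum_binom_central (C : comNzRingType) (V : lmodType C) (P : nat -> V) n :
  (0 < n)%N ->
  \sum_(0 <= j < n./2.+1) P (n - 2 * j)%N *+ 'C(n, j)
  = \sum_(0 <= j < (n.-1)./2.+1) ('C(n, j))%:R *: P (n - 2 * j)%N + phin C n *: P 0.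
Proof.
move=> n_gt0; under eq_bigr => j _ do rewrite -scaler_nat.
rewrite /phin; case: (boolP (odd n)) => [n_odd|n_even].
  by rewrite scale0r addr0 (_ : n./2 = (n.-1)./2) //; lia.
rewrite (_ : n./2 = (n.-1)./2.+1); last lia.
by rewrite big_nat_recr //= (_ : n - 2 * (n.-1)./2.+1 = 0)%N; first congr (_ + (_ *: _)); lia.
Qed.

Section Powers.
Variables (C : comNzRingType) (m : nat) (a b : C).
Hypothesis m_ge2 : (2 <= m)%N.

Lemma expA_zbinom n : (n < m)%N ->
  Aab m a b ^+ n = \sum_(0 <= k < m) Pab m a b k *+ zbinom n k.
Proof.
elim: n => [_|n IHn lt_nm].
  by rewrite expr0 sum_zbinom; [rewrite big_nat1 mulr1n | lia].
rewrite exprSr IHn 1?ltnW // -mulmxE mulmx_suml sum_zbinomS //.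
apply: eq_big_nat => k _; rewrite -scaler_nat -scalemxAl scaler_nat.
have [le_kn|lt_nk] := leqP k n; first by rewrite Pab_mulA //; lia.
by rewrite zbinom_gt // !mulr0n.
Qed.

End Powers.

Local Open Scope complex_scope.

Theorem mainTheorem10 (R : rcfType) (m : nat) (a b : R[i]) :
  (2 <= m)%N ->
  forall n : nat, (1 <= n <= m.-1)%N ->
    (Aab m a b) ^+ n =
      \sum_(0 <= j < (n.-1)./2.+1) ('C(n, j))%:R *: Pab m a b (n - 2 * j)
      + phin R[i] n *: 1%:M.
Proof.
move=> m_ge2 n /andP[n_gt0 n_le].
rewrite expA_zbinom // ?sum_zbinom ?sum_binom_central //; lia.
Qed.
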